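(* Let $\lambda>0$. For any $\alpha_1,\alpha_2>0$ there exists $\alpha_3=\alpha_3(\alpha_1,\alpha_2)>0$ such that, for every $n$, $\rho(u)\le\alpha_3$ for all $u\in X_0(\Omega)$ with $I_{n,\lambda}(u)\le\alpha_1$ and $\|u\|_{p_n}\le\alpha_2$.
   Context: Let $N\ge3$, $s\in(0,1)$ with $s>\frac12$ if $N=3$, $2^*=\frac{2N}{N-2}$, and $p\in(2+\frac{4s}{N-2},2^* )$ if $N>6-4s$, $p\in(2^*-1,2^* )$ if $N\le6-4s$. $\Omega\subset\mathbb{R}^N$ bounded open with $C^{1,\alpha}$ boundary; $X_0(\Omega)=\{u\in H^1(\mathbb{R}^N):u|_\Omega\in H^1_0(\Omega),\ u=0\text{ a.e. outside }\Omega\}$ with norm $\rho(u)=(\|\nabla u\|_2^2+[u]_s^2)^{1/2}$, $[u]_s^2=\iint\frac{|u(x)-u(y)|^2}{|x-y|^{N+2s}}$. $p_n\in(p,2^* )$ with $p_n\to2^*$. $I_{n,\lambda}(u)=\frac12\rho(u)^2-\frac\lambda p\|u\|_p^p-\frac1{p_n}\|u\|_{p_n}^{p_n}$; $\|\cdot\|_q$ denotes the $L^q$ norm. *)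

From HB Require Import structures.
From mathcomp Require Import all_boot all_order all_algebra.
From mathcomp Require Import all_classical all_reals all_analysis.
Set Implicit Arguments.
Unset Strict Implicit.
Unset Printing Implicit Defensive.
Import Order.TTheory GRing.Theory Num.Theory.
Import numFieldNormedType.Exports.
Local Open Scope classical_set_scope.
Local Open Scope ring_scope.

Section Defs.
Variable R : realType.

Definition enorm k (x : 'rV[R]_k) : R := Num.sqrt (\sum_(i < k) x ord0 i ^+ 2).

(* Lebesgue integral over R^k of a nonnegative (Borel) function, computed as
   an iterated integral of the 1-d Lebesgue measure (Tonelli). *)
Fixpoint intN (k : nat) : ('rV[R]_k -> \bar R) -> \bar R :=
  match k with
  | 0 => fun f => f 0
  | k'.+1 => fun f =>
      (\int[@lebesgue_measure R]_t intN (fun v : 'rV[R]_k' =>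
                 f (row_mx (\row_(j < 1) t) v)))%E
  end.

Definition intN_on k (A : set 'rV[R]_k) (f : 'rV[R]_k -> \bar R) : \bar R :=
  intN (fun x => if x \in A then f x else 0%E).

Definition sintN k (f : 'rV[R]_k -> R) : \bar R :=
  (intN (fun x => (Num.max (f x) 0)%:E) - intN (fun x => (Num.max (- f x) 0)%:E))%E.

Definition Lq k (q : R) (f : 'rV[R]_k -> R) : \bar R :=
  ((intN (fun x => (`|f x| `^ q)%:E)) `^ q^-1)%E.

Definition borelN k : set (set 'rV[R]_k) := <<s [set A | open A] >>.
Definition borel_fun k (f : 'rV[R]_k -> R) :=
  forall B : set R, measurable B -> borelN (f @^-1` B).

Definition ej k (i : 'I_k) : 'rV[R]_k := delta_mx ord0 i.

Fixpoint dpart k (l : seq 'I_k) (f : 'rV[R]_k -> R) : 'rV[R]_k -> R :=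
  match l with
  | [::] => f
  | i :: l' => fun x => 'D_(ej i) (dpart l' f) x
  end.

Definition smooth k (f : 'rV[R]_k -> R) :=
  forall l : seq 'I_k, continuous (dpart l f) /\
    forall i x, derivable (dpart l f) x (ej i).

Definition supp k (f : 'rV[R]_k -> R) := closure [set x | f x != 0].

Definition test_fun k (f : 'rV[R]_k -> R) := smooth f /\ compact (supp f).
Definition test_fun_on k (A : set 'rV[R]_k) f := test_fun f /\ supp f `<=` A.

Definition weak_grad k (u : 'rV[R]_k -> R) (g : 'I_k -> 'rV[R]_k -> R) :=
  forall phi, test_fun phi -> forall i,
    sintN (fun x => u x * 'D_(ej i) phi x) = (- sintN (fun x => (g i x * phi x)%R))%E.

Definition H1 k (u : 'rV[R]_k -> R) (g : 'I_k -> 'rV[R]_k -> R) :=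
  [/\ borel_fun u, forall i, borel_fun (g i),
      (intN (fun x => (u x ^+ 2)%:E) < +oo)%E,
      forall i, (intN (fun x => (g i x ^+ 2)%:E) < +oo)%E
    & weak_grad u g].

(* X_0(Omega): u in H^1(R^k), u = 0 a.e. outside Omega, and u|_Omega in
   H^1_0(Omega) (limit in the H^1(Omega) norm of C_c^infinity(Omega) functions) *)
Definition X0 k (Om : set 'rV[R]_k) (u : 'rV[R]_k -> R)
    (g : 'I_k -> 'rV[R]_k -> R) :=
  [/\ H1 u g,
      intN_on (~` Om) (fun x => (`|u x|)%:E) = 0%E
    & exists phi : nat -> 'rV[R]_k -> R,
        [/\ forall m, test_fun_on Om (phi m),
            (fun m => intN_on Om (fun x => ((phi m x - u x) ^+ 2)%:E))
               @ \oo --> 0%E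
          & forall i, (fun m => intN_on Om
               (fun x => (('D_(ej i) (phi m) x - g i x) ^+ 2)%:E)) @ \oo --> 0%E]].

Definition grad_sq k (g : 'I_k -> 'rV[R]_k -> R) : \bar R :=
  intN (fun x => (\sum_(i < k) g i x ^+ 2)%:E).

Definition gagliardo_sq k (s : R) (u : 'rV[R]_k -> R) : \bar R :=
  intN (fun y => intN (fun x =>
     ((u x - u y) ^+ 2 / (enorm (x - y) `^ (k%:R + 2 * s)))%:E)).

Definition rho k (s : R) (u : 'rV[R]_k -> R) (g : 'I_k -> 'rV[R]_k -> R) : \bar R :=
  ((grad_sq g + gagliardo_sq s u) `^ (2^-1))%E.

Definition Ifun k (s lam p pn : R) (u : 'rV[R]_k -> R) (g : 'I_k -> 'rV[R]_k -> R)
  : \bar R :=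
  ((2^-1)%:E * (rho s u g) `^ 2 - (lam / p)%:E * (Lq p u) `^ p
     - (pn^-1)%:E * (Lq pn u) `^ pn)%E.

Definition bounded_dom k (Om : set 'rV[R]_k) :=
  exists M : R, forall x, Om x -> enorm x <= M.

Definition C1a m (gam : 'rV[R]_m -> R) (a : R) :=
  (forall y (j : 'I_m), derivable gam y (ej j)) /\
  exists C : R, forall (j : 'I_m) y z,
    `|'D_(ej j) gam y - 'D_(ej j) gam z| <= C * enorm (y - z) `^ a.

(* Omega has C^{1,alpha} boundary: near each boundary point, after a rigid
   motion (orthogonal Q, the last of the k new coordinates being the
   vertical one), Omega is the strict epigraph of a C^{1,alpha} function of N-1
   variables *)
Definition C1a_boundary k (Om : set 'rV[R]_k) :=
  exists a : R, 0 < a <= 1 /\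
  forall x0, closure Om x0 -> closure (~` Om) x0 ->
    exists r : R, 0 < r /\
    exists Q : 'M[R]_(k, k.-1 + 1), Q *m Q^T = 1%:M /\
    exists gam : 'rV[R]_k.-1 -> R, C1a gam a /\
      forall x, enorm (x - x0) < r ->
        (Om x <-> (let y := (x - x0) *m Q in
                   gam (lsubmx y) < rsubmx y ord0 ord0)).

Definition crit (N : nat) : R := 2 * N%:R / (N%:R - 2).

Definition p_admissible (N : nat) (s p : R) :=
  if 6 - 4 * s < N%:R then 2 + 4 * s / (N%:R - 2) < p < crit N
  else crit N - 1 < p < crit N.

End Defs.

From HB Require Import structures.
From mathcomp Require Import all_boot all_order all_algebra.
From mathcomp Require Import all_classical all_reals all_analysis.
From mathcomp Require Import measurable_realfun lra.
Import Order.TTheory GRing.Theory Num.Theory.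
Import numFieldNormedType.Exports.
Local Open Scope classical_set_scope.
Local Open Scope ring_scope.

Set Implicit Arguments.
Unset Strict Implicit.
Unset Printing Implicit Defensive.

(* Since u vanishes outside the bounded set Omega, |u|^p <= |u|^{p_n} + 1
   there, so ||u||_p^p <= ||u||_{p_n}^{p_n} + |Omega|, while
   ||u||_{p_n}^{p_n} <= a2^{p_n} <= (1 + a2)^{2^*} uniformly in n.  Hence
   rho(u)^2 / 2 = I_{n,lambda}(u) + lambda/p ||u||_p^p + 1/p_n ||u||_{p_n}^{p_n}
   is bounded independently of n and u.  To integrate the pointwise bounds,
   the iterated integral [intN] is identified with the integral against a
   product measure on the Borel sets of R^N. *)

Section borel_rV.
Variable R : realType.

Definition borel_rV k := g_sigma_algebraType [set A : set 'rV[R]_k | open A].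

Definition row_cons k (z : measurableTypeR R * borel_rV k) : borel_rV k.+1 :=
  row_mx (\row_(j < 1) z.1) z.2.

Lemma ball_rV k (x y : 'rV[R]_k) e :
  ball x e y <-> 0 < e /\ forall j, `|x ord0 j - y ord0 j| < e.
Proof.
split=> [[e0 xy]|[e0 xy]]; split=> //.
  by move=> j; exact: xy.
by move=> i j; rewrite ord1; exact: xy.
Qed.

Lemma open_measurable_rV k (A : set (borel_rV k)) :
  open (A : set 'rV[R]_k) -> measurable A.
Proof. exact: sub_sigma_algebra. Qed.

Lemma row_cons0 k : @row_cons k (0, 0) = 0.
Proof.
have row0 : \row_(j < 1) 0 = 0 :> 'rV[R]_1 by apply/rowP => j; rewrite !mxE.
by rewrite /row_cons /= row0 row_mx0.
Qed.

Lemma row_cons_preimage_ball k (t : R) (v : 'rV[R]_k) e :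
  @row_cons k @^-1` ball (row_cons (t, v)) e = ball t e `*` ball v e.
Proof.
apply/seteqP; split=> -[t' v']; rewrite /row_cons /=.
  move=> /ball_rV[e0 tv]; split.
    by have := tv (@lshift 1 k ord0); rewrite !(@row_mxEl _ 1 1 k) !mxE.
  by apply/ball_rV; split=> // j; have := tv (rshift 1 j); rewrite !(@row_mxEr _ 1 1 k).
move=> [tt' /ball_rV[e0 vv']]; apply/ball_rV; split=> // j.
case: (@split_ordP 1 k j) => j' ->; last by rewrite !(@row_mxEr _ 1 1 k).
by rewrite !(@row_mxEl _ 1 1 k) !mxE.
Qed.

Lemma rat_approx_rV k (v : 'rV[R]_k) e : 0 < e ->
  exists w : 'rV[rat]_k, ball v e (map_mx ratr w).
Proof.
move=> e0; have [wf vw] : exists wf : 'I_k -> rat, forall j,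
    v ord0 j - e < ratr (wf j) < v ord0 j + e.
  apply: (@fin_all_exists _ (fun=> rat)
    (fun j w => v ord0 j - e < ratr w < v ord0 j + e)) => j.
  have /rat_in_itvoo[w] : v ord0 j - e < v ord0 j + e by rewrite ltrD2l gtrN.
  by rewrite in_itv /=; exists w.
exists (\row_j wf j); apply/ball_rV; split=> // j; rewrite !mxE.
by have /andP[? ?] := vw j; rewrite ltr_norml; apply/andP; split; lra.
Qed.

Definition rat_box k (i : rat * 'rV[rat]_k * rat) :
    set (measurableTypeR R * borel_rV k) :=
  ball (ratr i.1.1 : R) (ratr i.2) `*` ball (map_mx ratr i.1.2 : 'rV[R]_k) (ratr i.2).

Lemma rat_box_cover k (U : set 'rV[R]_k.+1) t (v : 'rV[R]_k) :
  open U -> U (row_cons (t, v)) ->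
  exists i, rat_box i (t, v) /\ rat_box i `<=` @row_cons k @^-1` U.
Proof.
move=> oU /oU /nbhs_ballP[e /= e0 tvU].
have /rat_in_itvoo[r] : (0 : R) < e / 2 by rewrite divr_gt0.
rewrite in_itv /= => /andP[r0 re].
have /rat_in_itvoo[q] : t - ratr r < t + ratr r by rewrite ltrD2l gtrN.
rewrite in_itv /= => /andP[tq1 tq2].
have tq : ball t (ratr r) (ratr q).
  by rewrite /ball /= ltr_norml; apply/andP; split; lra.
have [w vw] := rat_approx_rV v r0.
exists (q, w, r); split; first by split; apply: ball_sym.
move=> [t' v'] [/= qt' wv']; apply: tvU.
have : (ball t e `*` ball v e) (t', v').
  split; apply: (le_ball (e1 := ratr r + ratr r)); try lra.
    exact: ball_triangle tq qt'.
  exact: ball_triangle vw wv'.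
by rewrite -row_cons_preimage_ball.
Qed.

(* By [rat_box_cover], the preimage of an open set is the countable union of
   the rational boxes it contains. *)
Lemma measurable_row_cons k : measurable_fun setT (@row_cons k).
Proof.
apply: (measurability [set A : set (borel_rV k.+1) | open A]) => //.
move=> _ [U oU <-]; rewrite setTI.
pose F n := if unpickle n is Some i then
  if pselect (rat_box i `<=` @row_cons k @^-1` U) is left _ then rat_box i
  else set0 else set0.
suff -> : @row_cons k @^-1` U = \bigcup_n F n.
  apply: bigcupT_measurable => n; rewrite /F; case: (unpickle n) => // i.
  case: pselect => // _; apply: measurableX.
    by apply: open_measurable; exact: ball_open.
  by apply: open_measurable_rV; exact: ball_open.
apply/seteqP; split=> [[t v] /(rat_box_cover oU)[i [tvi iU]]|z [n _]].
  exists (pickle i); first by [].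
  by rewrite /F pickleK; case: pselect => [_|]; last by [].
rewrite /F; case: (unpickle n) => // i.
by case: pselect => // iU; exact: iU.
Qed.

Lemma sigma_finite_ball_lty k (mu : {measure set (borel_rV k) -> \bar R}) :
  (forall r, (mu (ball (0%R : 'rV[R]_k) r) < +oo)%E) -> sigma_finite setT mu.
Proof.
move=> mu_ball; exists (fun i : nat => ball (0%R : 'rV[R]_k) i%:R); last first.
  by move=> i; split => //; apply: open_measurable_rV; exact: ball_open.
apply/seteqP; split => // x _.
exists (Num.truncn (\sum_j `|x ord0 j|)).+1 => //.
apply/ball_rV; split => // j.
rewrite mxE sub0r normrN (le_lt_trans _ (truncnS_gt _)) //.
by rewrite (bigD1 j) //= lerDl; apply: sumr_ge0 => *; exact: normr_ge0.
Qed.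

Local Open Scope ereal_scope.

Section lebesgue_cons.
Variables (k : nat) (m : {sigma_finite_measure set (borel_rV k) -> \bar R}).

(* The otherwise unused argument carries the hypothesis that the
   sigma-finiteness instance below needs. *)
Definition lebesgue_cons of (forall r, m (ball (0%R : 'rV[R]_k) r) < +oo) :
    set (borel_rV k.+1) -> \bar R :=
  pushforward (lebesgue_measure \x m) (@row_cons k).

Hypothesis m_ball : forall r, m (ball (0%R : 'rV[R]_k) r) < +oo.

Let lebesgue_cons0 : lebesgue_cons m_ball set0 = 0.
Proof. by rewrite /lebesgue_cons /pushforward preimage_set0 measure0. Qed.

Let lebesgue_cons_ge0 A : 0 <= lebesgue_cons m_ball A.
Proof. exact: (measure_ge0 (lebesgue_measure \x m)). Qed.

Let lebesgue_cons_sigma_additive : semi_sigma_additive (lebesgue_cons m_ball).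
Proof.
move=> F mF tF mUF; rewrite /lebesgue_cons /pushforward preimage_bigcup.
have mpre A : measurable A -> measurable (@row_cons k @^-1` A).
  by move=> mA; rewrite -[X in measurable X]setTI; exact: measurable_row_cons.
apply: measure_semi_sigma_additive.
- by move=> n; exact: mpre.
- apply/trivIsetP => /= i j _ _ ij; rewrite -preimage_setI.
  by move/trivIsetP : tF => /(_ _ _ _ _ ij) ->//; rewrite preimage_set0.
- by rewrite -preimage_bigcup; exact: mpre.
Qed.

HB.instance Definition _ := isMeasure.Build _ _ _ (lebesgue_cons m_ball)
  lebesgue_cons0 lebesgue_cons_ge0 lebesgue_cons_sigma_additive.

Lemma lebesgue_cons_ball_lty r :
  lebesgue_cons m_ball (ball (0%R : 'rV[R]_k.+1) r) < +oo.
Proof.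
have [r0|r0] := leP r 0%R; first by rewrite le0_ball0 // measure0.
rewrite /lebesgue_cons /pushforward -row_cons0 row_cons_preimage_ball.
rewrite product_measure1E; last 2 first.
- by apply: open_measurable; exact: ball_open.
- by apply: open_measurable_rV; exact: ball_open.
have ball_fin : @lebesgue_measure R (ball 0%R r) \is a fin_num.
  by rewrite lebesgue_measure_ball ?ltW.
rewrite -ge0_fin_numE; last exact: mule_ge0.
by rewrite fin_numM // ge0_fin_numE // m_ball.
Qed.

HB.instance Definition _ := Measure_isSigmaFinite.Build _ _ _
  (lebesgue_cons m_ball) (sigma_finite_ball_lty lebesgue_cons_ball_lty).

End lebesgue_cons.

Lemma intN_as_integral k :
  exists m : {sigma_finite_measure set (borel_rV k) -> \bar R},
  (forall r, m (ball (0%R : 'rV[R]_k) r) < +oo) /\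
  forall f : borel_rV k -> \bar R, measurable_fun setT f ->
    (forall x, 0 <= f x) -> intN f = \int[m]_x f x.
Proof.
elim: k => [|k [m [m_ball intN_m]]].
  exists (\d_(0%R : borel_rV 0)); split => [r|f mf f0]; first by rewrite /dirac ltry.
  by rewrite /= integral_dirac // /dirac indicE in_setT mul1e.
exists (lebesgue_cons m_ball : {sigma_finite_measure set _ -> \bar R}).
split => [|f mf f0 /=]; first exact: lebesgue_cons_ball_lty.
have mf_cons := measurableT_comp mf (@measurable_row_cons k).
transitivity (\int[lebesgue_measure]_t \int[m]_v (f \o @row_cons k) (t, v)).
  apply: eq_integral => t _; apply: intN_m => [|v]; last exact: f0.
  exact: (measurable_fun_pair2 t mf_cons).
have := fubini_tonelli1 (m1 := lebesgue_measure) (m2 := m) _ mf_cons (fun z => f0 _).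
rewrite /fubini_F => <-.
by rewrite ge0_integral_pushforward //; exact: measurable_row_cons.
Qed.

End borel_rV.

Section intN_estimates.
Variable R : realType.
Local Open Scope ereal_scope.

Lemma coord_le_enorm k (x : 'rV[R]_k) j : (`|x ord0 j| <= enorm x)%R.
Proof.
rewrite /enorm -sqrtr_sqr ler_sqrt; last by apply: sumr_ge0 => *; exact: sqr_ge0.
by rewrite (bigD1 j) //= lerDl; apply: sumr_ge0 => *; exact: sqr_ge0.
Qed.

Lemma bounded_dom_measure_lty k (mu : {measure set (borel_rV R k) -> \bar R})
    (Om : set (borel_rV R k)) :
  (forall r, mu (ball (0%R : 'rV[R]_k) r) < +oo) -> measurable Om ->
  bounded_dom (Om : set 'rV[R]_k) -> mu Om < +oo.
Proof.
move=> mu_ball mOm [M OmM]; apply: le_lt_trans (mu_ball (`|M| + 1)%R).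
apply: le_measure; rewrite ?inE //.
  by apply: open_measurable_rV; exact: ball_open.
move=> x Omx; apply/ball_rV; split=> [|j]; first by rewrite ltr_wpDl.
rewrite mxE sub0r normrN.
by have := coord_le_enorm x j; have := OmM x Omx; have := ler_norm M; lra.
Qed.

Lemma measurable_borel_fun k (u : 'rV[R]_k -> R) :
  borel_fun u -> measurable_fun setT (u : borel_rV R k -> R).
Proof. by move=> bu _ Y mY; rewrite setTI; exact: bu. Qed.

Lemma intN_ge0 k (f : 'rV[R]_k -> \bar R) : (forall x, 0 <= f x) -> 0 <= intN f.
Proof.
elim: k f => [|k IH] f f0 /=; first exact: f0.
by apply: integral_ge0 => t _; apply: IH => v; exact: f0.
Qed.

Lemma Lq_poweR k (q : R) (u : 'rV[R]_k -> R) : q != 0%R ->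
  (Lq q u) `^ q = intN (fun x => (`|u x| `^ q)%:E).
Proof.
move=> q0; rewrite /Lq -poweRrM mulVf // poweRe1 //.
by apply: intN_ge0 => x; rewrite lee_fin powR_ge0.
Qed.

Lemma intN_powR_le_of_Lq_le k (q c a : R) (u : 'rV[R]_k -> R) :
  (0 < q)%R -> (q <= c)%R -> (0 <= a)%R -> Lq q u <= a%:E ->
  intN (fun x => (`|u x| `^ q)%:E) <= ((1 + a) `^ c)%:E.
Proof.
move=> q0 qc a0 ua; rewrite -Lq_poweR ?gt_eqF //.
apply: (@le_trans _ _ (a%:E `^ q)).
  by apply: (gt0_ler_poweR (ltW q0)); rewrite // in_itv /= leey andbT ?poweR_ge0 //.
rewrite poweR_EFin lee_fin; apply: (@le_trans _ _ ((1 + a) `^ q)%R).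
  by apply: ge0_ler_powR; rewrite ?nnegrE; lra.
by apply: ler_powR => //; lra.
Qed.

Lemma powR_le_powR_add (y p q : R) : (0 <= y)%R -> (1 <= p)%R -> (p <= q)%R ->
  (y `^ p <= y `^ q + y)%R /\ (y `^ p <= y `^ q + 1)%R.
Proof.
move=> y0 p1 pq; have yq0 := powR_ge0 y q.
have [y1|y1] := leP y 1%R.
  have yp : (y `^ p <= y)%R.
    have [->|yn0] := eqVneq y 0%R.
      by rewrite powR0 // gt_eqF // (lt_le_trans ltr01).
    by apply: ge1r_powR => //; rewrite y1 andbT lt_neqAle eq_sym yn0.
  by split; lra.
have : (y `^ p <= y `^ q)%R by apply: ler_powR => //; exact: ltW.
by split; lra.
Qed.

Section intN_integral.
Variables (k : nat) (mu : {measure set (borel_rV R k) -> \bar R}).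
Hypothesis intN_mu : forall f : borel_rV R k -> \bar R,
  measurable_fun setT f -> (forall x, 0 <= f x) -> intN f = \int[mu]_x f x.

(* Off [Om] the bound is |u|^p <= |u|^q + |u|, whose last term integrates to
   zero, and on [Om] it is |u|^p <= |u|^q + 1. *)
Lemma intN_powR_le_add (Om : set (borel_rV R k)) (u : 'rV[R]_k -> R) (p q : R) :
  measurable Om -> borel_fun u -> intN_on (~` Om) (fun x => (`|u x|)%:E) = 0 ->
  (1 <= p)%R -> (p <= q)%R ->
  intN (fun x => (`|u x| `^ p)%:E) <= intN (fun x => (`|u x| `^ q)%:E) + mu Om.
Proof.
move=> mOm bu uOm p1 pq.
have mabs : measurable_fun setT (fun x : borel_rV R k => `|u x|)%R.
  apply: measurableT_comp (measurable_borel_fun bu); exact: normr_measurable.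
have mpow r : measurable_fun setT (fun x : borel_rV R k => (`|u x| `^ r)%:E).
  by apply/measurable_EFinP; exact: (measurableT_comp (measurable_powR r) mabs).
have mOut : measurable_fun setT
    (fun x : borel_rV R k => (\1_(~` Om) x * `|u x|)%:E).
  apply/measurable_EFinP/measurable_funM => //.
  by apply: measurable_indic; exact: measurableC.
have mIn : measurable_fun setT (fun x : borel_rV R k => (\1_Om x : R)%:E).
  by apply/measurable_EFinP; exact: measurable_indic.
have out0 : \int[mu]_x (\1_(~` Om) x * `|u x|)%:E = 0.
  rewrite -(intN_mu mOut); last by move=> x; rewrite lee_fin mulr_ge0.
  rewrite -uOm /intN_on; congr intN; apply/funext => x; rewrite indicE.
  by case: (x \in ~` Om); rewrite ?mul1r ?mul0r.
have intN_pow r : intN (fun x => (`|u x| `^ r)%:E) = \int[mu]_x (`|u x| `^ r)%:E.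
  by apply: intN_mu => // x; rewrite lee_fin powR_ge0.
rewrite !intN_pow.
apply: (@le_trans _ _ (\int[mu]_x ((`|u x| `^ q)%:E + (\1_Om x)%:E
                                   + (\1_(~` Om) x * `|u x|)%:E))).
  apply: (ge0_le_integral _ _ _ (mpow p)) => //.
  - by apply: emeasurable_funD => //; apply: emeasurable_funD.
  - move=> x _; rewrite -!EFinD lee_fin.
    have [outOm inOm] := powR_le_powR_add (normr_ge0 (u x)) p1 pq.
    by rewrite !indicE in_setC; case: (x \in Om) => /=; lra.
rewrite ge0_integralD //; try by [move=> x _; rewrite ?adde_ge0 // lee_fin
  ?powR_ge0 ?mulr_ge0 | exact: emeasurable_funD].
rewrite ge0_integralD //; try by move=> x _; rewrite lee_fin ?powR_ge0.
by rewrite integral_indic // setIT out0 adde0.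
Qed.

End intN_integral.

Lemma rho_le_of_Ifun_le k (s lam p q a A B : R) (u : 'rV[R]_k -> R) g :
  (0 <= lam)%R -> (0 < p)%R -> (p <= q)%R ->
  intN (fun x => (`|u x| `^ p)%:E) <= A%:E ->
  intN (fun x => (`|u x| `^ q)%:E) <= B%:E ->
  Ifun s lam p q u g <= a%:E ->
  rho s u g <= ((2 * (a + lam / p * A + p^-1 * B)) `^ 2^-1)%:E.
Proof.
move=> lam0 p0 pq; have q0 := lt_le_trans p0 pq.
rewrite /Ifun !Lq_poweR ?gt_eqF //.
move: (intN_ge0 (f := fun x => (`|u x| `^ p)%:E) (fun x => powR_ge0 _ _)).
move: (intN_ge0 (f := fun x => (`|u x| `^ q)%:E) (fun x => powR_ge0 _ _)).
move: (poweR_ge0 _ _ : 0 <= rho s u g).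
case: (intN (fun x => (`|u x| `^ p)%:E)) => [A'||] //.
case: (intN (fun x => (`|u x| `^ q)%:E)) => [B'||] //.
case: (rho s u g) => [r||] //; last first.
  by rewrite poweRyr // gt0_muley ?lte_fin ?invr_gt0.
rewrite poweR_EFin -!EFinM -!EFinB !lee_fin => r0 B'0 A'0 A'A B'B hI.
have r2 : (r `^ 2 <= 2 * (a + lam / p * A + p^-1 * B))%R.
  have : (lam / p * A' <= lam / p * A)%R.
    by apply: ler_wpM2l => //; exact: divr_ge0 lam0 (ltW p0).
  have : (q^-1 * B' <= p^-1 * B)%R.
    by apply: ler_pM => //; [rewrite invr_ge0; exact: ltW | rewrite lef_pV2 ?posrE].
  lra.
have -> : r = ((r `^ 2) `^ 2^-1)%R by rewrite -powRrM mulfV ?powRr1.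
by apply: ge0_ler_powR; rewrite ?nnegrE ?powR_ge0 //; exact: le_trans (powR_ge0 _ _) r2.
Qed.

Lemma p_admissible_gt1 N (s p : R) :
  (3 <= N)%N -> (0 < s)%R -> p_admissible N s p -> (1 < p)%R.
Proof.
move=> N3 s0 padm; have N3R : (3 <= N%:R :> R)%R by rewrite (ler_nat R 3 N).
have crit2 : (2 <= crit R N)%R by rewrite /crit ler_pdivlMr; lra.
move: padm; rewrite /p_admissible; case: ifP => _ /andP[p_gt _]; last by lra.
have : (0 <= 4 * s / (N%:R - 2))%R by apply: divr_ge0; lra.
lra.
Qed.

End intN_estimates.

Theorem lemma3p3 (R : realType) (N : nat) (s p : R) (pn : nat -> R)
    (Om : set 'rV[R]_N) (lam : R) :
  (3 <= N)%N -> 0 < s < 1 -> (N = 3%N -> 2^-1 < s) ->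
  p_admissible N s p ->
  (forall n, p < pn n < crit R N) -> pn @ \oo --> crit R N ->
  open Om -> bounded_dom Om -> C1a_boundary Om ->
  0 < lam ->
  forall a1 a2 : R, 0 < a1 -> 0 < a2 ->
  exists a3 : R, 0 < a3 /\
    forall (n : nat) (u : 'rV[R]_N -> R) (g : 'I_N -> 'rV[R]_N -> R),
      X0 Om u g ->
      (Ifun s lam p (pn n) u g <= a1%:E)%E ->
      (Lq (pn n) u <= a2%:E)%E ->
      (rho s u g <= a3%:E)%E.
Proof.
move=> N3 /andP[s0 _] _ padm hpn _ oOm bOm _ lam0 a1 a2 a10 a20.
have p1 := p_admissible_gt1 N3 s0 padm; have p0 := lt_trans ltr01 p1.
have [mu [mu_ball intN_mu]] := intN_as_integral R N.
have mOm : measurable (Om : set (borel_rV R N)) by exact: open_measurable_rV.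
have [V V0 OmV] : exists2 V, 0 <= V & mu Om = V%:E.
  exists (fine (mu Om)); first by apply: fine_ge0; exact: measure_ge0.
  by rewrite fineK // ge0_fin_numE ?measure_ge0 // bounded_dom_measure_lty.
pose K := (1 + a2) `^ crit R N; have K0 : 0 <= K := powR_ge0 _ _.
exists ((2 * (a1 + lam / p * (K + V) + p^-1 * K)) `^ 2^-1).
split=> [|n u g [[bu _ _ _ _] uOm _] uI uLq].
  have : 0 <= lam / p by rewrite divr_ge0 ?ltW.
  have : 0 <= p^-1 by rewrite invr_ge0 ltW.
  by move=> *; rewrite powR_gt0 //; nra.
have /andP[pq qcrit] := hpn n.
have uq := intN_powR_le_of_Lq_le (lt_trans p0 pq) (ltW qcrit) (ltW a20) uLq.
have up : (intN (fun x => (`|u x| `^ p)%:E) <= (K + V)%:E)%E.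
  apply: le_trans (intN_powR_le_add intN_mu mOm bu uOm (ltW p1) (ltW pq)) _.
  by rewrite EFinD; apply: leeD uq _; rewrite -OmV.
exact: rho_le_of_Ifun_le (ltW lam0) p0 (ltW pq) up uq uI.
Qed.
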